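(* Let $\mathcal{H}$ be a real Hilbert space, let $A_1, A_2:\mathcal{H}\to 2^{\mathcal{H}}$ be maximally monotone, let $B:\mathcal{H}\to\mathcal{H}$ be monotone and $L$-Lipschitz continuous ($L>0$), let $C:\mathcal{H}\to\mathcal{H}$ be $\beta$-cocoercive ($\beta>0$), and let $\gamma>0$. Let $z_0, y_0, y_{-1}\in\mathcal{H}$ and define sequences $\{x_n\},\{y_n\},\{z_n\}$ for $n\ge 0$ by $$x_{n+1}=J_{\gamma A_1}z_n,\qquad y_{n+1}=J_{\gamma A_2}\big(2x_{n+1}-z_n-2\gamma By_n+\gamma By_{n-1}-\gamma Cy_n\big),\qquad z_{n+1}=z_n+y_{n+1}-x_{n+1}.$$ Suppose that there exist $x,z\in\mathcal{H}$ such that $z-x\in\gamma A_1x$ and $x-z\in\gamma(A_2+B+C)x$. Then for all $n\in\mathbb{N}$, $$\|z_{n+1}-z\|^2+2\gamma\langle By_{n+1}-By_n,x-y_{n+1}\rangle+\|z_{n+1}-z_n\|^2 \le \|z_n-z\|^2+2\gamma\langle By_n-By_{n-1},x-y_n\rangle+2\gamma\langle By_n-By_{n-1},y_n-y_{n+1}\rangle+2\gamma\langle Cy_n-Cx,x-y_{n+1}\rangle.$$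
   Context: For a maximally monotone operator $A$ and $\gamma>0$, $J_{\gamma A}=(\mathrm{Id}+\gamma A)^{-1}$ is the resolvent (single-valued, defined on all of $\mathcal{H}$). An operator $C$ is $\beta$-cocoercive if $\langle x-y,Cx-Cy\rangle\ge\beta\|Cx-Cy\|^2$ for all $x,y$. *)

From mathcomp Require Import all_boot all_order all_algebra.
From mathcomp Require Import classical_sets reals.
Set Implicit Arguments. Unset Strict Implicit. Unset Printing Implicit Defensive.
Import Order.TTheory GRing.Theory Num.Theory.
Local Open Scope ring_scope.
Local Open Scope classical_set_scope.

Section Hilbert.
Variables (R : realType) (V : lmodType R).

Definition ip_norm (ip : V -> V -> R) (v : V) : R := Num.sqrt (ip v v).

Definition is_real_inner_product (ip : V -> V -> R) : Prop :=
  [/\ (forall u v, ip u v = ip v u),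
      (forall (a : R) u v w, ip (a *: u + v) w = a * ip u w + ip v w),
      (forall v, 0 <= ip v v) &
      (forall v, ip v v = 0 -> v = 0)].

Definition ip_complete (ip : V -> V -> R) : Prop :=
  forall u : nat -> V,
    (forall e : R, 0 < e -> exists N : nat, forall m n : nat,
        (N <= m)%N -> (N <= n)%N -> ip_norm ip (u m - u n) < e) ->
    exists l : V, forall e : R, 0 < e -> exists N : nat, forall n : nat,
        (N <= n)%N -> ip_norm ip (u n - l) < e.

Definition real_hilbert (ip : V -> V -> R) : Prop :=
  is_real_inner_product ip /\ ip_complete ip.

Definition monotone_op (ip : V -> V -> R) (A : V -> set V) : Prop :=
  forall x y u v, A x u -> A y v -> 0 <= ip (x - y) (u - v).

Definition maximally_monotone (ip : V -> V -> R) (A : V -> set V) : Prop :=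
  monotone_op ip A /\
  forall A' : V -> set V, monotone_op ip A' ->
    (forall x u, A x u -> A' x u) -> forall x u, A' x u -> A x u.

Definition monotone_fun (ip : V -> V -> R) (B : V -> V) : Prop :=
  forall x y, 0 <= ip (x - y) (B x - B y).

Definition lipschitz_fun (ip : V -> V -> R) (L : R) (B : V -> V) : Prop :=
  forall x y, ip_norm ip (B x - B y) <= L * ip_norm ip (x - y).

Definition cocoercive (ip : V -> V -> R) (beta : R) (C : V -> V) : Prop :=
  forall x y, beta * (ip_norm ip (C x - C y)) ^+ 2 <= ip (x - y) (C x - C y).

Definition op_scale (g : R) (A : V -> set V) : V -> set V :=
  fun x => [set g *: a | a in A x].

Definition op_add3 (A : V -> set V) (B C : V -> V) : V -> set V :=
  fun x => [set a + B x + C x | a in A x].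

(* p = J_{gamma A} z, i.e. p = (Id + gamma A)^{-1} z, i.e. z - p \in gamma A p *)
Definition resolvent_rel (g : R) (A : V -> set V) (z p : V) : Prop :=
  op_scale g A p (z - p).

(* y_{n-1} given y_{-1} = ym1 and y : nat -> V with y n = y_n *)
Definition yprev (ym1 : V) (y : nat -> V) (n : nat) : V :=
  match n with 0 => ym1 | k.+1 => y k end.

End Hilbert.

(* Put P = x_{n+1} - x, Q = y_{n+1} - x and u = z_n - z.  Monotonicity of
   gamma A1 and of gamma A2, read through the two resolvent steps, gives
   <P, u - P> >= 0 and <Q, (P - Q) + (P - u) + e> >= 0, where e collects the
   forward terms in B and C.  The sum of the two left-hand sides is
   <d, u - d> + <Q, e> with d = P - Q = z_n - z_{n+1}, and
   2 <d, u - d> = |u|^2 - |d|^2 - |u - d|^2.  Adding gamma <Q, B y_{n+1} - B x>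
   >= 0 cancels B x and yields the estimate. *)

From mathcomp Require Import all_boot all_order all_algebra.
From mathcomp Require Import classical_sets reals.
From mathcomp Require Import lra.
Import Order.TTheory GRing.Theory Num.Theory.
Set Implicit Arguments. Unset Strict Implicit. Unset Printing Implicit Defensive.
Local Open Scope ring_scope.

Lemma op_scale_add3_sub (R : realType) (V : lmodType R) (g : R)
    (A : V -> set V) (B C : V -> V) x u :
  op_scale g (op_add3 A B C) x u -> op_scale g A x (u - (g *: B x + g *: C x)).
Proof.
case=> _ [a Aa <-] <-; exists a => //.
by rewrite !scalerDr -(addrA (g *: a)) addrK.
Qed.

Section RealInnerProduct.
Variables (R : realType) (V : lmodType R) (ip : V -> V -> R).
Hypothesis ip_inner : is_real_inner_product ip.

Lemma ipC u v : ip u v = ip v u.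
Proof. by case: ip_inner. Qed.

Lemma ipDl u v w : ip (u + v) w = ip u w + ip v w.
Proof. by case: ip_inner => _ ipL _ _; rewrite -{1}(scale1r u) ipL mul1r. Qed.

Lemma ipZl a u w : ip (a *: u) w = a * ip u w.
Proof.
case: ip_inner => _ ipL _ _.
have ip0l : ip 0 w = 0.
  by have := ipDl 0 0 w; rewrite addr0; lra.
by rewrite -[a *: u]addr0 ipL ip0l addr0.
Qed.

Lemma ipNl u w : ip (- u) w = - ip u w.
Proof. by rewrite -scaleN1r ipZl mulN1r. Qed.

Lemma ipBl u v w : ip (u - v) w = ip u w - ip v w.
Proof. by rewrite ipDl ipNl. Qed.

Lemma ipDr u v w : ip w (u + v) = ip w u + ip w v.
Proof. by rewrite ipC ipDl !(ipC w). Qed.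

Lemma ipZr a u w : ip w (a *: u) = a * ip w u.
Proof. by rewrite ipC ipZl ipC. Qed.

Lemma ipNr u w : ip w (- u) = - ip w u.
Proof. by rewrite ipC ipNl ipC. Qed.

Lemma ipBr u v w : ip w (u - v) = ip w u - ip w v.
Proof. by rewrite ipDr ipNr. Qed.

Lemma ip_norm_sqr v : ip_norm ip v ^+ 2 = ip v v.
Proof. by case: ip_inner => _ _ ip_ge0 _; rewrite sqr_sqrtr. Qed.

Lemma op_scale_monotone (g : R) (A : V -> set V) :
  0 <= g -> monotone_op ip A -> monotone_op ip (op_scale g A).
Proof.
move=> g_ge0 monA x y _ _ [a Aa <-] [b Ab <-].
by rewrite -scalerBr ipZr mulr_ge0 // monA.
Qed.

Lemma fejer_step_centered u P Q e :
  0 <= ip P (u - P) -> 0 <= ip Q ((P - Q) + (P - u) + e) ->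
  ip_norm ip (u + (Q - P)) ^+ 2 + ip_norm ip (Q - P) ^+ 2
    <= ip_norm ip u ^+ 2 + 2 * ip Q e.
Proof.
rewrite !ip_norm_sqr !(ipDl, ipBl, ipNl, ipDr, ipBr, ipNr).
by have := ipC P Q; have := ipC P u; have := ipC Q u; lra.
Qed.

Lemma fejer_step w p q x z f g :
  0 <= ip (p - x) ((w - p) - (z - x)) ->
  0 <= ip (q - x) ((2 *: p - w + f - q) - (x - z - g)) ->
  ip_norm ip (w + q - p - z) ^+ 2 + ip_norm ip (w + q - p - w) ^+ 2
    <= ip_norm ip (w - z) ^+ 2 + 2 * ip (q - x) (f + g).
Proof.
move=> mon_p mon_q.
have -> : w + q - p - z = (w - z) + ((q - x) - (p - x)).
  by rewrite opprB subrKA addrA [LHS]addrAC (addrAC w).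
have -> : w + q - p - w = (q - x) - (p - x).
  by rewrite opprB subrKA addrAC (addrC w) addrK.
apply: fejer_step_centered.
- by move: mon_p; rewrite !(ipBr, ipNr); lra.
- by move: mon_q; rewrite !(ipDr, ipBr, ipNr, ipZr); lra.
Qed.

End RealInnerProduct.

Theorem lemma3p1 (R : realType) (V : lmodType R) (ip : V -> V -> R)
  (A1 A2 : V -> set V) (B C : V -> V) (L beta gamma : R)
  (xs ys zs : nat -> V) (ym1 x z : V) :
  real_hilbert ip ->
  maximally_monotone ip A1 -> maximally_monotone ip A2 ->
  monotone_fun ip B -> 0 < L -> lipschitz_fun ip L B ->
  0 < beta -> cocoercive ip beta C ->
  0 < gamma ->
  (forall n : nat, resolvent_rel gamma A1 (zs n) (xs n.+1)) ->
  (forall n : nat, resolvent_rel gamma A2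
      (2 *: xs n.+1 - zs n - (2 * gamma) *: B (ys n)
         + gamma *: B (yprev ym1 ys n) - gamma *: C (ys n))
      (ys n.+1)) ->
  (forall n : nat, zs n.+1 = zs n + ys n.+1 - xs n.+1) ->
  op_scale gamma A1 x (z - x) ->
  op_scale gamma (op_add3 A2 B C) x (x - z) ->
  forall n : nat,
    (ip_norm ip (zs n.+1 - z)) ^+ 2
      + 2 * gamma * ip (B (ys n.+1) - B (ys n)) (x - ys n.+1)
      + (ip_norm ip (zs n.+1 - zs n)) ^+ 2
    <= (ip_norm ip (zs n - z)) ^+ 2
      + 2 * gamma * ip (B (ys n) - B (yprev ym1 ys n)) (x - ys n)
      + 2 * gamma * ip (B (ys n) - B (yprev ym1 ys n)) (ys n - ys n.+1)
      + 2 * gamma * ip (C (ys n) - C x) (x - ys n.+1).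
Proof.
move=> [ip_inner _] [monA1 _] [monA2 _] monB _ _ _ _ gamma_gt0
  resA1 resA2 z_next solA1 solA2 n.
have mon1 := op_scale_monotone ip_inner (ltW gamma_gt0) monA1.
have mon2 := op_scale_monotone ip_inner (ltW gamma_gt0) monA2.
set f := - ((2 * gamma) *: B (ys n)) + gamma *: B (yprev ym1 ys n)
  - gamma *: C (ys n).
have resA2n : resolvent_rel gamma A2 (2 *: xs n.+1 - zs n + f) (ys n.+1).
  by rewrite /f !addrA; exact: resA2.
have := fejer_step ip_inner (mon1 _ _ _ _ (resA1 n) solA1)
  (mon2 _ _ _ _ resA2n (op_scale_add3_sub solA2)).
have := mulr_ge0 (ltW gamma_gt0) (monB (ys n.+1) x).
rewrite z_next /f !(ipC ip_inner (ys n.+1 - x)).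
rewrite !(ipDl ip_inner, ipBl ip_inner, ipNl ip_inner, ipZl ip_inner).
rewrite !(ipDr ip_inner, ipBr ip_inner, ipNr ip_inner, ipZr ip_inner).
lra.
Qed.
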